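(* Let $(A,B)$ and $(A',B')$ be two weakly non-singular pairs of loxodromic elements in $\mathrm{Sp}(n,1)$, with associated tuples $p=(p_1,\dots,p_{2n})$ and $p'=(p'_1,\dots,p'_{2n})$ and normalized Gram matrices $G(p)$, $G(p')$. Then there exists $C\in\mathrm{Sp}(n,1)$ with $C(p_i)=p'_i$ for $i=1,\dots,2n$ if and only if $O_{G(p)}=O_{G(p')}$.
   Context: $\mathbb H^{n,1}$: right $\mathbb H$-vector space $\mathbb H^{n+1}$ with form $\langle\mathbf z,\mathbf w\rangle=\bar w_{n+1}z_1+\bar w_2z_2+\dots+\bar w_nz_n+\bar w_1z_{n+1}$; points of $\mathbb H\mathbb P^n$ are right lines, $\mathbf z\mapsto z$. $\mathrm{Sp}(n,1)$ preserves the form. A loxodromic $A$ (exactly two boundary fixed points, no real eigenvalue) has null eigenvectors $\mathbf a_A,\mathbf r_A$ (attracting/repelling fixed points $a_A,r_A$) and positive eigenvectors $\mathbf x_{j,A}$, $1\le j\le n-1$ (points $x_{j,A}$). A pair $(A,B)$ is weakly non-singular if $A,B$ are regular (right-eigenvalue similarity classes pairwise distinct), have no common fixed point, and $n-2$ canonical flags $(a_A,L_A,W_{j,A})$ of $A$ form generic pairs with $n-2$ canonical flags of $B$ (here $L_A$ is the $\mathbb H$-line through $a_A,r_A$, $W_{j,A}$ the projectivization of $\mathbf x_{j,A}^\perp$; flags $(p,C,\Pi),(p',C',\Pi')$ are a generic pair if $p\notin\partial C'$, $p'\notin\partial C$, $\partial C\cap\partial\Pi'=\emptyset=\partial C'\cap\partial\Pi$);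 indices are arranged so that for $1\le k\le n-2$, $\langle\mathbf x_{k,A},\mathbf a_B\rangle,\langle\mathbf x_{k,B},\mathbf a_A\rangle,\langle\mathbf r_A,\mathbf x_{k,B}\rangle,\langle\mathbf r_B,\mathbf x_{k,A}\rangle\ne0$. Associated tuple: $p_1=a_A,p_2=r_A,p_3=a_B,p_4=r_B$, $p_j=x_{j-4,A}$ ($5\le j\le n+2$), $p_k=x_{k-(n+2),B}$ ($n+3\le k\le 2n$). The Gram matrix $G(p)=(\langle\mathbf p_i,\mathbf p_j\rangle)$ is normalized if the lifts satisfy $g_{12}=g_{13}=g_{14}=1$, $|g_{23}|=1$, $g_{1k}=1$ ($n+3\le k\le 2n$), $g_{3j}=1$ ($5\le j\le n+2$); it is well defined up to the action $g_{ij}\mapsto\mu g_{ij}\bar\mu$ of $\mu\in\mathrm{Sp}(1)$ (unit quaternions). $O_{G(p)}=\{(\mu g_{ij}\bar\mu)_{i,j}:\mu\in\mathrm{Sp}(1)\}$ is this $\mathrm{Sp}(1)$-orbit. *)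

(* Quaternions over a real field
   R : realType are defined here as a record of four reals, equipped with a
   (non-commutative) nzRing structure; the right H-vector space H^{n,1} is
   the type of column vectors 'cV[quat R]_(n.+1), and quaternionic
   (n+1)x(n+1) matrices act on the left. *)
From HB Require Import structures.
From mathcomp Require Import all_boot all_order all_algebra.
From mathcomp Require Import all_reals.
From mathcomp Require Import ring.
Set Implicit Arguments.
Unset Strict Implicit.
Unset Printing Implicit Defensive.
Import Order.TTheory GRing.Theory Num.Theory.
Local Open Scope ring_scope.

(* Quaternions  q = q0 + q1 i + q2 j + q3 k                           *)
Record quat (R : realType) := Quat { q0 : R; q1 : R; q2 : R; q3 : R }.
Arguments Quat {R}.

Section Quaternions.
Variable R : realType.

Definition quat2tup (q : quat R) : R * R * R * R := (q0 q, q1 q, q2 q, q3 q).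
Definition tup2quat (t : R * R * R * R) : quat R :=
  let: (a, b, c, d) := t in Quat a b c d.
Lemma quat2tupK : cancel quat2tup tup2quat. Proof. by case. Qed.

HB.instance Definition _ := Equality.copy (quat R) (can_type quat2tupK).
HB.instance Definition _ := Choice.copy (quat R) (can_type quat2tupK).

Definition qzero : quat R := Quat 0 0 0 0.
Definition qone : quat R := Quat 1 0 0 0.
Definition qadd (p q : quat R) : quat R :=
  Quat (q0 p + q0 q) (q1 p + q1 q) (q2 p + q2 q) (q3 p + q3 q).
Definition qopp (p : quat R) : quat R := Quat (- q0 p) (- q1 p) (- q2 p) (- q3 p).
(* Hamilton product: i^2 = j^2 = k^2 = ijk = -1 *)
Definition qmul (p q : quat R) : quat R :=
  Quat (q0 p * q0 q - q1 p * q1 q - q2 p * q2 q - q3 p * q3 q)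
       (q0 p * q1 q + q1 p * q0 q + q2 p * q3 q - q3 p * q2 q)
       (q0 p * q2 q - q1 p * q3 q + q2 p * q0 q + q3 p * q1 q)
       (q0 p * q3 q + q1 p * q2 q - q2 p * q1 q + q3 p * q0 q).

Lemma qaddA : associative qadd.
Proof. by case=> ? ? ? ?; case=> ? ? ? ?; case=> ? ? ? ?; rewrite /qadd /= !addrA. Qed.
Lemma qaddC : commutative qadd.
Proof. by case=> ? ? ? ?; case=> ? ? ? ?; rewrite /qadd /= [X in Quat X _ _ _]addrC
  [X in Quat _ X _ _]addrC [X in Quat _ _ X _]addrC [X in Quat _ _ _ X]addrC. Qed.
Lemma qadd0 : left_id qzero qadd.
Proof. by case=> ? ? ? ?; rewrite /qadd /= !add0r. Qed.
Lemma qaddN : left_inverse qzero qopp qadd.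
Proof. by case=> ? ? ? ?; rewrite /qadd /= !addNr. Qed.

HB.instance Definition _ := GRing.isZmodule.Build (quat R) qaddA qaddC qadd0 qaddN.

Lemma qmulA : associative qmul.
Proof. by case=> ? ? ? ?; case=> ? ? ? ?; case=> ? ? ? ?; rewrite /qmul /=; congr Quat; ring. Qed.
Lemma qmul1 : left_id qone qmul.
Proof. by case=> ? ? ? ?; rewrite /qmul /=; congr Quat; ring. Qed.
Lemma qmulr1 : right_id qone qmul.
Proof. by case=> ? ? ? ?; rewrite /qmul /=; congr Quat; ring. Qed.
Lemma qmulDl : left_distributive qmul qadd.
Proof. by case=> ? ? ? ?; case=> ? ? ? ?; case=> ? ? ? ?; rewrite /qmul /= /qadd /=; congr Quat; ring. Qed.
Lemma qmulDr : right_distributive qmul qadd.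
Proof. by case=> ? ? ? ?; case=> ? ? ? ?; case=> ? ? ? ?; rewrite /qmul /= /qadd /=; congr Quat; ring. Qed.
Lemma qone_neq0 : qone != 0.
Proof. by apply/eqP => /(f_equal (@q0 R)) /= /eqP; rewrite oner_eq0. Qed.

HB.instance Definition _ :=
  GRing.Zmodule_isNzRing.Build (quat R) qmulA qmul1 qmulr1 qmulDl qmulDr qone_neq0.

Definition qreal (r : R) : quat R := Quat r 0 0 0.
Definition qconj (q : quat R) : quat R := Quat (q0 q) (- q1 q) (- q2 q) (- q3 q).
Definition qnorm2 (q : quat R) : R := q0 q ^+ 2 + q1 q ^+ 2 + q2 q ^+ 2 + q3 q ^+ 2.
Definition is_unit_quat (mu : quat R) : Prop := qnorm2 mu = 1.
(* similarity of quaternions: mu = q lam q^{-1} for some q <> 0 *)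
Definition qsimilar (lam mu : quat R) : Prop := exists q : quat R, q != 0 /\ q * lam = mu * q.
End Quaternions.

(* Coordinates z_1,...,z_{n+1} are the entries z 0 0, ..., z n 0.      *)
Section Hyperbolic.
Variable R : realType.
Variable n : nat.

Definition qvec := 'cV[quat R]_(n.+1).

Definition rscale (z : qvec) (lam : quat R) : qvec := map_mx (fun c => c * lam) z.

(* <z,w> = \bar w_{n+1} z_1 + \bar w_2 z_2 + ... + \bar w_n z_n + \bar w_1 z_{n+1} *)
Definition hform (z w : qvec) : quat R :=
  qconj (w ord_max 0) * z ord0 0
  + \sum_(i < n.+1 | (0 < (i : nat) < n)%N) qconj (w i 0) * z i 0
  + qconj (w ord0 0) * z ord_max 0.

Definition in_Sp (A : 'M[quat R]_(n.+1)) : Prop :=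
  forall z w : qvec, hform (A *m z) (A *m w) = hform z w.

Definition null_vec (z : qvec) : Prop := z != 0 /\ hform z z = 0.
Definition pos_vec (z : qvec) : Prop := exists2 r : R, 0 < r & hform z z = qreal r.

(* z and w (nonzero) represent the same point of HP^n (same right line) *)
Definition same_point (z w : qvec) : Prop :=
  z != 0 /\ w != 0 /\ exists lam : quat R, lam != 0 /\ z = rscale w lam.

Definition eigen (A : 'M[quat R]_(n.+1)) (z : qvec) (lam : quat R) : Prop :=
  z != 0 /\ A *m z = rscale z lam.

Definition bd_fixed (A : 'M[quat R]_(n.+1)) (z : qvec) : Prop :=
  null_vec z /\ exists lam, eigen A z lam.

Definition loxodromic (A : 'M[quat R]_(n.+1)) : Prop :=
  [/\ in_Sp A,
      (exists u v, [/\ bd_fixed A u, bd_fixed A v, ~ same_point u v &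
                       forall z, bd_fixed A z -> same_point z u \/ same_point z v])
    & forall (z : qvec) (r : R), ~ eigen A z (qreal r)].

Definition lox_eigvecs (A : 'M[quat R]_(n.+1)) (a r : qvec) (x : nat -> qvec) : Prop :=
  [/\ loxodromic A,
      null_vec a /\ (exists2 lam, eigen A a lam & 1 < qnorm2 lam),
      null_vec r /\ (exists2 lam, eigen A r lam & qnorm2 lam < 1)
    & forall j, (1 <= j <= n.-1)%N -> pos_vec (x j) /\ exists lam, eigen A (x j) lam].

Definition eigfamily (a r : qvec) (x : nat -> qvec) (i : nat) : qvec :=
  if i == 0%N then a else if i == 1%N then r else x i.-1.

Definition regular (A : 'M[quat R]_(n.+1)) (a r : qvec) (x : nat -> qvec) : Prop :=
  forall i j lam mu, (i <= n)%N -> (j <= n)%N -> i <> j ->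
    eigen A (eigfamily a r x i) lam -> eigen A (eigfamily a r x j) mu ->
    ~ qsimilar lam mu.

Definition in_Hline (u v z : qvec) : Prop :=
  exists alpha beta : quat R, z = rscale u alpha + rscale v beta.
Definition bd_Hline (u v z : qvec) : Prop := null_vec z /\ in_Hline u v z.
Definition bd_perp (x z : qvec) : Prop := null_vec z /\ hform z x = 0.

(* canonical flag (a, L, W_j) with L = H-line(a, r), W_j = P(x_j^perp);
   generic pair of flags (p, C, Pi), (p', C', Pi') *)
Definition generic_flags (a r x a' r' x' : qvec) : Prop :=
  [/\ ~ bd_Hline a' r' a, ~ bd_Hline a r a',
      (forall z, ~ (bd_Hline a r z /\ bd_perp x' z)) &
      (forall z, ~ (bd_Hline a' r' z /\ bd_perp x z))].

Definition weakly_nonsingular (A B : 'M[quat R]_(n.+1))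
    (aA rA : qvec) (xA : nat -> qvec) (aB rB : qvec) (xB : nat -> qvec) : Prop :=
  [/\ lox_eigvecs A aA rA xA, lox_eigvecs B aB rB xB,
      regular A aA rA xA /\ regular B aB rB xB,
      (forall z, ~ (bd_fixed A z /\ bd_fixed B z)) &
      forall k, (1 <= k <= n - 2)%N ->
        [/\ generic_flags aA rA (xA k) aB rB (xB k),
            hform (xA k) aB != 0, hform (xB k) aA != 0,
            hform rA (xB k) != 0 & hform rB (xA k) != 0]].

(* associated tuple p_1, ..., p_{2n} (1-based) *)
Definition assoc_tuple (aA rA : qvec) (xA : nat -> qvec) (aB rB : qvec)
    (xB : nat -> qvec) (i : nat) : qvec :=
  if i == 1%N then aA else if i == 2%N then rA
  else if i == 3%N then aB else if i == 4%N then rB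
  else if (i <= n.+2)%N then xA (i - 4)%N else xB (i - n.+2)%N.

Definition gram_entry (p : nat -> qvec) (i j : nat) : quat R := hform (p i) (p j).

Definition gram (p : nat -> qvec) : 'M[quat R]_(2 * n) :=
  \matrix_(i < 2 * n, j < 2 * n) gram_entry p i.+1 j.+1.

Definition normalized (p : nat -> qvec) : Prop :=
  let g := gram_entry p in
  [/\ g 1 2 = 1 /\ g 1 3 = 1, g 1 4 = 1, qnorm2 (g 2 3) = 1,
      (forall k, (n.+3 <= k <= 2 * n)%N -> g 1 k = 1) &
      (forall j, (5 <= j <= n.+2)%N -> g 3 j = 1)].

Definition Sp1_orbit (G : 'M[quat R]_(2 * n)) : 'M[quat R]_(2 * n) -> Prop :=
  fun M => exists mu : quat R, is_unit_quat mu /\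
             M = \matrix_(i, j) (mu * G i j * qconj mu).

End Hyperbolic.

(* If C in Sp(n,1) maps p_i to p'_i l_i, then g_ij = conj(l_j) g'_ij l_i.  The
   normalization (g_12 = g_13 = 1, |g_23| = 1, and g_1k = 1 or g_3j = 1 for every
   other index) forces all l_i to equal one unit quaternion nu, so
   G(p) = conj(nu) G(p') nu.  Conversely, if G(p) = mu G(p') conj(mu), the vectors
   q_i = p'_i conj(mu) have the Gram matrix of the p_i, and a Witt-type argument
   builds C with C p_i = q_i: first the hyperbolic pair (p_1, p_2) is placed, then
   each further p_i by a quaternionic reflection fixing the vectors already placed.
   Such reflections exist because a nonzero vector orthogonal to the timelike
   vector q_1 - q_2 has positive norm. *)

From HB Require Import structures.
From mathcomp Require Import all_boot all_order all_algebra.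
From mathcomp Require Import all_reals.
From mathcomp Require Import ring lra zify.
Import Order.TTheory GRing.Theory Num.Theory.
Set Implicit Arguments.
Unset Strict Implicit.
Unset Printing Implicit Defensive.
Local Open Scope ring_scope.

Section Quaternions.
Variable R : realType.
Local Notation H := (quat R).

Lemma quatP (a b : H) :
  q0 a = q0 b -> q1 a = q1 b -> q2 a = q2 b -> q3 a = q3 b -> a = b.
Proof. by case: a => ? ? ? ?; case: b => ? ? ? ? /= -> -> -> ->. Qed.

Lemma q0M (a b : H) : q0 (a * b) = q0 a * q0 b - q1 a * q1 b - q2 a * q2 b - q3 a * q3 b.
Proof. by []. Qed.
Lemma q1M (a b : H) : q1 (a * b) = q0 a * q1 b + q1 a * q0 b + q2 a * q3 b - q3 a * q2 b.
Proof. by []. Qed.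
Lemma q2M (a b : H) : q2 (a * b) = q0 a * q2 b - q1 a * q3 b + q2 a * q0 b + q3 a * q1 b.
Proof. by []. Qed.
Lemma q3M (a b : H) : q3 (a * b) = q0 a * q3 b + q1 a * q2 b - q2 a * q1 b + q3 a * q0 b.
Proof. by []. Qed.
Lemma q0D (a b : H) : q0 (a + b) = q0 a + q0 b. Proof. by []. Qed.
Lemma q1D (a b : H) : q1 (a + b) = q1 a + q1 b. Proof. by []. Qed.
Lemma q2D (a b : H) : q2 (a + b) = q2 a + q2 b. Proof. by []. Qed.
Lemma q3D (a b : H) : q3 (a + b) = q3 a + q3 b. Proof. by []. Qed.
Lemma q0N (a : H) : q0 (- a) = - q0 a. Proof. by []. Qed.
Lemma q1N (a : H) : q1 (- a) = - q1 a. Proof. by []. Qed.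
Lemma q2N (a : H) : q2 (- a) = - q2 a. Proof. by []. Qed.
Lemma q3N (a : H) : q3 (- a) = - q3 a. Proof. by []. Qed.
Lemma q0_0 : q0 (0 : H) = 0. Proof. by []. Qed.
Lemma q1_0 : q1 (0 : H) = 0. Proof. by []. Qed.
Lemma q2_0 : q2 (0 : H) = 0. Proof. by []. Qed.
Lemma q3_0 : q3 (0 : H) = 0. Proof. by []. Qed.
Lemma q0_1 : q0 (1 : H) = 1. Proof. by []. Qed.
Lemma q1_1 : q1 (1 : H) = 0. Proof. by []. Qed.
Lemma q2_1 : q2 (1 : H) = 0. Proof. by []. Qed.
Lemma q3_1 : q3 (1 : H) = 0. Proof. by []. Qed.

Definition qE := (q0M, q1M, q2M, q3M, q0D, q1D, q2D, q3D, q0N, q1N, q2N, q3N,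
  q0_0, q1_0, q2_0, q3_0, q0_1, q1_1, q2_1, q3_1).

Local Ltac quat_ring := apply: quatP; rewrite ?qE /=; ring.

Lemma qconjM (a b : H) : qconj (a * b) = qconj b * qconj a. Proof. quat_ring. Qed.
Lemma qconjD (a b : H) : qconj (a + b) = qconj a + qconj b. Proof. quat_ring. Qed.
Lemma qconjN (a : H) : qconj (- a) = - qconj a. Proof. quat_ring. Qed.
Lemma qconj0 : qconj (0 : H) = 0. Proof. quat_ring. Qed.
Lemma qconj1 : qconj (1 : H) = 1. Proof. quat_ring. Qed.
Lemma qconjK : involutive (@qconj R). Proof. move=> a; quat_ring. Qed.
Lemma qconjB (a b : H) : qconj (a - b) = qconj a - qconj b.
Proof. by rewrite qconjD qconjN. Qed.

Lemma qrealC (r : R) (a : H) : qreal r * a = a * qreal r. Proof. quat_ring. Qed.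
Lemma qrealD (r s : R) : qreal (r + s) = qreal r + qreal s :> H. Proof. quat_ring. Qed.
Lemma qreal1 : qreal 1 = 1 :> H. Proof. quat_ring. Qed.
Lemma qreal_eq0 (r : R) : (qreal r == 0 :> H) = (r == 0).
Proof. by apply/eqP/eqP => [/(congr1 (@q0 R))|->] //; quat_ring. Qed.

Lemma qconj_fixed_real (a : H) : qconj a = a -> a = qreal (q0 a).
Proof. by case: a => a0 a1 a2 a3 [] h1 h2 h3; congr Quat; lra. Qed.

Lemma mulqconjl (a : H) : qconj a * a = qreal (qnorm2 a).
Proof. rewrite /qnorm2; quat_ring. Qed.
Lemma mulqconjr (a : H) : a * qconj a = qreal (qnorm2 a).
Proof. rewrite /qnorm2; quat_ring. Qed.

Lemma qconj_qreal_mul (b : H) (s : R) : qconj b * qreal s * b = qreal (s * qnorm2 b).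
Proof. rewrite /qnorm2; quat_ring. Qed.

Lemma qnorm2M (a b : H) : qnorm2 (a * b) = qnorm2 a * qnorm2 b.
Proof. rewrite /qnorm2 ?qE; ring. Qed.
Lemma qnorm2_conj (a : H) : qnorm2 (qconj a) = qnorm2 a.
Proof. rewrite /qnorm2 /=; ring. Qed.
Lemma qnorm2_ge0 (a : H) : 0 <= qnorm2 a.
Proof. rewrite /qnorm2; nra. Qed.
Lemma qnorm2_0 : qnorm2 (0 : H) = 0.
Proof. by rewrite /qnorm2 /=; ring. Qed.
Lemma qnorm2_eq0 (a : H) : (qnorm2 a == 0) = (a == 0).
Proof.
apply/eqP/eqP => [|->]; last exact: qnorm2_0.
case: a => a0 a1 a2 a3; rewrite /qnorm2 /= => h.
by apply: quatP; rewrite /=; nra.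
Qed.

Lemma qnorm2_1 : qnorm2 (1 : H) = 1.
Proof. by rewrite /qnorm2 /= expr1n expr0n /= !addr0. Qed.

Lemma unit_qconj_mul_eq1 (u l : H) : qnorm2 u = 1 -> qconj u * l = 1 -> l = u.
Proof. by move=> u1 ul; rewrite -[l]mul1r -qreal1 -u1 -mulqconjr -mulrA ul mulr1. Qed.

Definition qinv (a : H) : H := qconj a * qreal (qnorm2 a)^-1.

Lemma qmulVr : {in predC1 0, left_inverse 1 qinv *%R}.
Proof.
move=> a a0; have n0 : qnorm2 a != 0 by rewrite qnorm2_eq0.
rewrite /qinv -qrealC -mulrA mulqconjl; apply: quatP; rewrite ?qE /=.
all: by rewrite ?mulr0 ?mul0r ?subr0 ?addr0 // mulVf.
Qed.
Lemma qmulrV : {in predC1 0, right_inverse 1 qinv *%R}.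
Proof.
move=> a a0; have n0 : qnorm2 a != 0 by rewrite qnorm2_eq0.
rewrite /qinv mulrA mulqconjr; apply: quatP; rewrite ?qE /=.
all: by rewrite ?mulr0 ?mul0r ?subr0 ?addr0 // mulfV.
Qed.
Lemma qunitP (a b : H) : b * a = 1 /\ a * b = 1 -> a \in predC1 0.
Proof.
by case=> ba _; apply/eqP => a0; move: ba; rewrite a0 mulr0 => /eqP; rewrite eq_sym oner_eq0.
Qed.
Lemma qinv0 : {in [predC predC1 0], qinv =1 id}.
Proof. by move=> a; rewrite !inE negbK => /eqP ->; rewrite /qinv qconj0 mul0r. Qed.

HB.instance Definition _ := GRing.NzRing_hasMulInverse.Build H qmulVr qmulrV qunitP qinv0.

Lemma qunitE (a : H) : (a \is a GRing.unit) = (a != 0).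
Proof. by []. Qed.

Lemma normalized_scalars_unit (nu l2 l3 g g' : H) :
  qconj l2 * nu = 1 -> qconj l3 * nu = 1 -> g = qconj l3 * g' * l2 ->
  qnorm2 g = 1 -> qnorm2 g' = 1 -> [/\ qnorm2 nu = 1, l2 = nu & l3 = nu].
Proof.
move=> E2 E3 eg g1 g'1.
have nuU : nu \is a GRing.unit.
  rewrite qunitE; apply/eqP => nu0.
  by move: E2; rewrite nu0 mulr0 => /eqP; rewrite eq_sym oner_eq0.
have l23 : l2 = l3 by apply: (can_inj qconjK); apply: (mulIr nuU); rewrite E2 E3.
have l2_1 : qnorm2 l2 = 1.
  move/(congr1 (@qnorm2 R)): eg; rewrite !qnorm2M qnorm2_conj g1 g'1 -l23 mulr1 => h.
  by have := qnorm2_ge0 l2; nra.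
by rewrite (unit_qconj_mul_eq1 l2_1 E2) -l23.
Qed.

End Quaternions.

Section Form.
Variables (R : realType) (n : nat).
Local Notation H := (quat R).
Local Notation V := (qvec R n).

Lemma hform_addl (z z' w : V) : hform (z + z') w = hform z w + hform z' w.
Proof.
rewrite /hform (eq_bigr (fun i => qconj (w i 0) * z i 0 + qconj (w i 0) * z' i 0));
  last by move=> i _; rewrite mxE mulrDr.
by rewrite big_split !mxE !mulrDr [RHS]addrACA -(addrACA (_ * z ord0 0)).
Qed.

Lemma hform_addr (z w w' : V) : hform z (w + w') = hform z w + hform z w'.
Proof.
rewrite /hform (eq_bigr (fun i => qconj (w i 0) * z i 0 + qconj (w' i 0) * z i 0));
  last by move=> i _; rewrite mxE qconjD mulrDl.
by rewrite big_split !mxE !qconjD !mulrDl [RHS]addrACA -(addrACA (_ * z ord0 0)).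
Qed.

Lemma hform_scalel (z w : V) l : hform (rscale z l) w = hform z w * l.
Proof.
rewrite /hform !mxE !mulrDl mulr_suml !mulrA.
by congr (_ + _ + _); apply: eq_bigr => i _; rewrite mxE mulrA.
Qed.

Lemma hform_scaler (z w : V) l : hform z (rscale w l) = qconj l * hform z w.
Proof.
rewrite /hform !mxE !mulrDr mulr_sumr !qconjM !mulrA.
by congr (_ + _ + _); apply: eq_bigr => i _; rewrite mxE qconjM mulrA.
Qed.

Lemma hform_conj (z w : V) : qconj (hform z w) = hform w z.
Proof.
rewrite /hform !qconjD (big_morph _ (@qconjD R) (@qconj0 R)) !qconjM !qconjK.
rewrite (eq_bigr (fun i => qconj (z i 0) * w i 0)); last first.
  by move=> i _; rewrite qconjM qconjK.
by rewrite addrC (addrC (qconj (z ord0 0) * _)) addrA.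
Qed.

Lemma hform0l (w : V) : hform 0 w = 0.
Proof. by apply: (addrI (hform 0 w)); rewrite -hform_addl !addr0. Qed.

Lemma hform_oppl (z w : V) : hform (- z) w = - hform z w.
Proof. by apply/eqP; rewrite -addr_eq0 -hform_addl addNr hform0l. Qed.

Lemma hform_oppr (z w : V) : hform z (- w) = - hform z w.
Proof. by rewrite -hform_conj hform_oppl qconjN hform_conj. Qed.

Lemma hform_subl (z z' w : V) : hform (z - z') w = hform z w - hform z' w.
Proof. by rewrite hform_addl hform_oppl. Qed.

Lemma hform_subr (z w w' : V) : hform z (w - w') = hform z w - hform z w'.
Proof. by rewrite hform_addr hform_oppr. Qed.

Lemma hform_self_real (z : V) : hform z z = qreal (q0 (hform z z)).
Proof. by apply: qconj_fixed_real; rewrite hform_conj. Qed.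

Lemma rscale1 (z : V) : rscale z 1 = z.
Proof. by apply/matrixP => i j; rewrite !mxE mulr1. Qed.

Lemma rscale0 (z : V) : rscale z 0 = 0.
Proof. by apply/matrixP => i j; rewrite !mxE mulr0. Qed.

Lemma rscale_neq0 (x : V) l : x != 0 -> l != 0 -> rscale x l != 0.
Proof.
move=> x0 l0; apply: contra x0 => /eqP/matrixP hx; apply/eqP/matrixP => i j.
by have := hx i j; rewrite !mxE => /(congr1 (fun a => a / l)); rewrite mulrK ?mul0r.
Qed.

Lemma mulmx_rscale (z : V) (m : 'M[H]_1) : z *m m = rscale z (m 0 0).
Proof. by apply/matrixP => i j; rewrite (ord1 j) !mxE big_ord1. Qed.

Lemma double_inj (x y : V) : x + x = y + y -> x = y.
Proof.
move/matrixP => h; apply/matrixP => i j; have := h i j; rewrite !mxE => hij.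
have := congr1 (@q0 R) hij; have := congr1 (@q1 R) hij.
have := congr1 (@q2 R) hij; have := congr1 (@q3 R) hij.
by rewrite !qE => ? ? ? ?; apply: quatP; lra.
Qed.

Lemma pos_vec_neq0 (x : V) : pos_vec x -> x != 0.
Proof.
case=> r r0 hx; apply/eqP => x0; move: hx r0; rewrite x0 hform0l.
by move=> /(congr1 (@q0 R)) /= <-; rewrite ltxx.
Qed.

Lemma in_Sp1 : in_Sp (1%:M : 'M[H]_(n.+1)).
Proof. by move=> z w; rewrite !mul1mx. Qed.

Lemma in_SpM (A B : 'M[H]_(n.+1)) : in_Sp A -> in_Sp B -> in_Sp (A *m B).
Proof. by move=> hA hB z w; rewrite -!mulmxA hA hB. Qed.

Lemma in_SpN (A : 'M[H]_(n.+1)) : in_Sp A -> in_Sp (- A).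
Proof. by move=> hA z w; rewrite !mulNmx hform_oppl hform_oppr opprK hA. Qed.

Lemma hform_Sp_rscale (C : 'M[H]_(n.+1)) (x y x' y' : V) l l' : in_Sp C ->
  C *m x = rscale x' l -> C *m y = rscale y' l' -> hform x y = qconj l' * hform x' y' * l.
Proof. by move=> hC Cx Cy; rewrite -hC Cx Cy hform_scalel hform_scaler. Qed.

Definition cone_coord (z : V) : H := z ord0 0 - z ord_max 0.

Definition enorm2 (z : V) : R := qnorm2 (z ord0 0) +
  \sum_(i < n.+1 | (0 < (i : nat) < n)%N) qnorm2 (z i 0) + qnorm2 (z ord_max 0).

Lemma cone_coordD (z z' : V) : cone_coord (z + z') = cone_coord z + cone_coord z'.
Proof. by rewrite /cone_coord !mxE opprD addrACA. Qed.

Lemma cone_coordZ (z : V) l : cone_coord (rscale z l) = cone_coord z * l.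
Proof. by rewrite /cone_coord !mxE mulrBl. Qed.

(* The form has signature (n, 1); its negative direction is measured by [cone_coord]. *)
Lemma hform_self_q0 (z : V) : q0 (hform z z) = enorm2 z - qnorm2 (cone_coord z).
Proof.
rewrite /hform !q0D (big_morph _ (@q0D R) (@q0_0 R)).
rewrite (eq_bigr (fun i => qnorm2 (z i 0))); last by move=> i _; rewrite mulqconjl.
rewrite /enorm2 /cone_coord /qnorm2 ?qE /=; ring.
Qed.

Lemma enorm2_ge0 (z : V) : 0 <= enorm2 z.
Proof.
rewrite /enorm2; apply: addr_ge0; [apply: addr_ge0|]; rewrite ?qnorm2_ge0 //.
by apply: sumr_ge0 => i _; apply: qnorm2_ge0.
Qed.

Lemma enorm2_eq0 (z : V) : enorm2 z = 0 -> z = 0.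
Proof.
rewrite /enorm2 => h.
have hs : 0 <= \sum_(i < n.+1 | (0 < (i : nat) < n)%N) qnorm2 (z i 0).
  by apply: sumr_ge0 => i _; apply: qnorm2_ge0.
have h0 := qnorm2_ge0 (z ord0 0); have h1 := qnorm2_ge0 (z ord_max 0).
have /eqP e0 : qnorm2 (z ord0 0) = 0 by lra.
have /eqP e1 : qnorm2 (z ord_max 0) = 0 by lra.
have es : \sum_(i < n.+1 | (0 < (i : nat) < n)%N) qnorm2 (z i 0) = 0 by lra.
have {}es := psumr_eq0P (fun i _ => qnorm2_ge0 (z i 0)) es.
apply/matrixP => i j; rewrite (ord1 j) mxE; apply/eqP; rewrite -qnorm2_eq0.
have [i0|i0] := eqVneq (i : nat) 0%N; first by rewrite (_ : i = ord0) //; apply: val_inj.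
have [im|im] := eqVneq (i : nat) n; first by rewrite (_ : i = ord_max) //; apply: val_inj.
by apply/eqP/es; have := ltn_ord i; lia.
Qed.

Definition timelike (t : V) : Prop := exists2 r : R, r < 0 & hform t t = qreal r.

(* Move [t] along [w] into the hyperplane [cone_coord = 0], where the form is nonnegative. *)
Lemma orth_timelike_gt0 (t w : V) :
  timelike t -> hform w t = 0 -> w != 0 -> 0 < q0 (hform w w).
Proof.
case=> r r0 htt hwt w0.
have [cw0|cw0] := eqVneq (cone_coord w) 0.
  rewrite hform_self_q0 cw0 qnorm2_0 subr0 lt_neqAle enorm2_ge0 andbT.
  by apply: contra w0 => /eqP/esym/enorm2_eq0 ->.
set b := - (cone_coord w)^-1 * cone_coord t.
set v := t + rscale w b.
have cv0 : cone_coord v = 0.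
  by rewrite cone_coordD cone_coordZ /b mulNr mulrN mulrA divrr ?mul1r ?subrr // qunitE.
clearbody b.
have hvv : hform v v = qreal (r + q0 (hform w w) * qnorm2 b).
  rewrite !hform_addl !hform_addr !hform_scalel !hform_scaler -(hform_conj w t) hwt.
  rewrite qconj0 mul0r mulr0 !addr0 add0r htt [hform w w]hform_self_real.
  by rewrite qconj_qreal_mul qrealD.
have := hform_self_q0 v; rewrite cv0 qnorm2_0 subr0 hvv /= => e.
have := enorm2_ge0 v; rewrite -e; have := qnorm2_ge0 b; nra.
Qed.

End Form.

Section Reflections.
Variables (R : realType) (n : nat).
Hypothesis n_gt0 : (0 < n)%N.
Local Notation H := (quat R).
Local Notation V := (qvec R n).

Lemma sum_ord_ends (F : 'I_n.+1 -> H) :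
  \sum_i F i = F ord0 + \sum_(i < n.+1 | (0 < (i : nat) < n)%N) F i + F ord_max.
Proof.
rewrite (bigD1 ord0) //= (bigD1 ord_max) /=; last by rewrite -val_eqE /= -lt0n n_gt0.
rewrite -addrA; congr (_ + _); rewrite addrC; congr (_ + _); apply: eq_bigl => i.
by rewrite -!val_eqE /= lt0n ltn_neqAle -ltnS ltn_ord andbT.
Qed.

Definition form_row (w : V) : 'rV[H]_(n.+1) :=
  \row_j (if (j : nat) == 0%N then qconj (w ord_max 0)
          else if (j : nat) == n then qconj (w ord0 0) else qconj (w j 0)).

Lemma hform_row (z w : V) : hform z w = (form_row w *m z) 0 0.
Proof.
rewrite mxE sum_ord_ends !mxE /= eqxx (gtn_eqF n_gt0) /hform.
by congr (_ + _ + _); apply: eq_bigr => i /andP [i0 iN]; rewrite mxE (gtn_eqF i0) (ltn_eqF iN).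
Qed.

Definition qreflection (w : V) (c : H) : 'M[H]_(n.+1) := 1%:M - rscale w c *m form_row w.

Lemma qreflectionE (w : V) c z : qreflection w c *m z = z - rscale w (c * hform z w).
Proof.
rewrite mulmxBl mul1mx -mulmxA mulmx_rscale -hform_row; congr (_ - _).
by apply/matrixP => i j; rewrite !mxE mulrA.
Qed.

Lemma hform_sub_self (u e : V) : hform u u = hform e e ->
  hform (u - e) (u - e) = hform u (u - e) + qconj (hform u (u - e)).
Proof. by move=> hue; rewrite !hform_subl !hform_subr qconjB !hform_conj -hue opprB. Qed.

(* With c = <u, w>^-1, the map z |-> z - w c <z, w> is an isometry because
   <w, w> = c^-1 + conj (c^-1) when <u, u> = <e, e>. *)
Lemma Sp_reflection (u e : V) : hform u u = hform e e -> hform u (u - e) != 0 ->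
  exists T, [/\ in_Sp T, T *m u = e & forall y, hform y (u - e) = 0 -> T *m y = y].
Proof.
move=> hue g0; set w := u - e; set g := hform u w; set c := g^-1.
have gc : g * c = 1 by rewrite divrr ?qunitE.
have cg : c * g = 1 by rewrite mulVr ?qunitE.
have hww : hform w w = g + qconj g by apply: hform_sub_self.
have ug : hform u w = g by [].
have uew : u - e = w by [].
clearbody c g w.
exists (qreflection w c); split.
- move=> z z'; rewrite !qreflectionE !hform_subl !hform_subr !hform_scalel !hform_scaler hww.
  rewrite -(hform_conj z' w) !qconjM !mulrA.
  set a := hform z w; set b := qconj (hform z' w).
  have key : qconj c * (g + qconj g) * c = qconj c + c.
    by rewrite mulrDr mulrDl -mulrA gc mulr1 -qconjM gc qconj1 mul1r.
  have -> : b * qconj c * (g + qconj g) * c * a = b * (qconj c * (g + qconj g) * c) * a.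
    by rewrite !mulrA.
  by rewrite key (mulrDr b) (mulrDl _ _ a) opprB addrK subrK.
- by rewrite qreflectionE ug cg rscale1 -uew subKr.
- by move=> y hy; rewrite qreflectionE hy mulr0 rscale0 subr0.
Qed.

End Reflections.

Section Extension.
Variables (R : realType) (n : nat).
Hypothesis n_gt0 : (0 < n)%N.
Local Notation H := (quat R).
Local Notation V := (qvec R n).

Lemma Sp_map_fixing_perp (u e t : V) :
  timelike t -> hform u u = hform e e -> hform (u - e) t = 0 ->
  exists T, [/\ in_Sp T, T *m u = e & forall y, hform y (u - e) = 0 -> T *m y = y].
Proof.
move=> ht hue hwt; have [w0|w0] := eqVneq (u - e) 0.
  exists 1%:M; split; [exact: in_Sp1 | by rewrite mul1mx; apply: subr0_eq |].
  by move=> y _; rewrite mul1mx.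
apply: Sp_reflection => //; apply: contraTneq (orth_timelike_gt0 ht hwt w0) => g0.
by rewrite hform_sub_self // g0 qconj0 addr0 ltxx.
Qed.

(* If <u, u - e> = 0 then <u, u + e> = 2 <u, u> != 0: reflect u onto -e and negate. *)
Lemma Sp_transitive_timelike (u e : V) :
  timelike u -> hform u u = hform e e -> exists D, in_Sp D /\ D *m u = e.
Proof.
case=> r r0 hur hue.
have [g0|g0] := eqVneq (hform u (u - e)) 0; last first.
  by have [T [hT Tu _]] := Sp_reflection n_gt0 hue g0; exists T.
have hue' : hform u u = hform (- e) (- e) by rewrite hform_oppl hform_oppr opprK.
have g1 : hform u (u - - e) != 0.
  rewrite opprK hform_addr; move: g0; rewrite hform_subr => /subr0_eq <-.
  by rewrite hur -qrealD qreal_eq0; apply/eqP; lra.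
have [T [hT Tu _]] := Sp_reflection n_gt0 hue' g1.
by exists (- T); split; [exact: in_SpN | rewrite mulNmx Tu opprK].
Qed.

Lemma hyperbolic_pairE (x y : V) :
  hform x x = 0 -> hform y y = 0 -> hform x y = 1 ->
  [/\ hform (x - y) (x - y) = qreal (-2), hform (x + y) (x + y) = qreal 2
    & hform (x + y) (x - y) = 0].
Proof.
move=> hxx hyy hxy; have hyx : hform y x = 1 by rewrite -hform_conj hxy qconj1.
rewrite !(hform_addl, hform_addr, hform_oppl, hform_oppr) hxx hyy hxy hyx.
by split; apply: quatP; rewrite ?qE /=; lra.
Qed.

Lemma hyperbolic_pair_timelike (x y : V) :
  hform x x = 0 -> hform y y = 0 -> hform x y = 1 -> timelike (x - y).
Proof.
move=> hxx hyy hxy; have [? _ _] := hyperbolic_pairE hxx hyy hxy.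
by exists (-2) => //; lra.
Qed.

(* Map the timelike p1 - p2 first, then p1 + p2 by a map fixing q1 - q2. *)
Lemma Sp_map_hyperbolic_pair (p1 p2 q1 q2 : V) :
  hform p1 p1 = 0 -> hform p2 p2 = 0 -> hform p1 p2 = 1 ->
  hform q1 q1 = 0 -> hform q2 q2 = 0 -> hform q1 q2 = 1 ->
  exists D, [/\ in_Sp D, D *m p1 = q1 & D *m p2 = q2].
Proof.
move=> hp11 hp22 hp12 hq11 hq22 hq12.
have [htt hss hst] := hyperbolic_pairE hp11 hp22 hp12.
have [htt' hss' hst'] := hyperbolic_pairE hq11 hq22 hq12.
have ht' := hyperbolic_pair_timelike hq11 hq22 hq12.
have [D1 [hD1 D1t]] := Sp_transitive_timelike (hyperbolic_pair_timelike hp11 hp22 hp12)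
  (etrans htt (esym htt')).
have hDs : hform (D1 *m (p1 + p2)) (D1 *m (p1 + p2)) = hform (q1 + q2) (q1 + q2).
  by rewrite hD1 hss hss'.
have orth : hform (D1 *m (p1 + p2) - (q1 + q2)) (q1 - q2) = 0.
  by rewrite hform_subl hst' -D1t hD1 hst subrr.
have [T [hT Ts Tfix]] := Sp_map_fixing_perp ht' hDs orth.
have Tt : T *m (q1 - q2) = q1 - q2 by rewrite Tfix // -hform_conj orth qconj0.
have TD1t : T *m D1 *m (p1 - p2) = q1 - q2 by rewrite -mulmxA D1t Tt.
have TD1s : T *m D1 *m (p1 + p2) = q1 + q2 by rewrite -mulmxA Ts.
have dbl (x y : V) : x + x = (x + y) + (x - y) /\ y + y = (x + y) - (x - y).
  by split; [rewrite addrACA subrr addr0 | rewrite opprB [RHS]addrC addrA subrK].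
have [[dp1 dp2] [dq1 dq2]] := (dbl p1 p2, dbl q1 q2).
exists (T *m D1); split; first exact: in_SpM.
- by apply: double_inj; rewrite -mulmxDr dp1 dq1 mulmxDr TD1s TD1t.
- by apply: double_inj; rewrite -mulmxDr dp2 dq2 mulmxBr TD1s TD1t.
Qed.

Lemma Sp_extend_by_one (P : pred nat) (p q : nat -> V) (a b k : nat) (D : 'M[H]_(n.+1)) :
  in_Sp D -> P a -> P b -> timelike (q a - q b) ->
  (forall i, P i -> D *m p i = q i) ->
  (forall i, P i || (i == k) -> hform (q k) (q i) = hform (p k) (p i)) ->
  exists D', in_Sp D' /\ forall i, P i || (i == k) -> D' *m p i = q i.
Proof.
move=> hD Pa Pb ht Dp G.
have orth i : P i -> hform (D *m p k - q k) (q i) = 0.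
  by move=> Pi; rewrite hform_subl -{1}(Dp i Pi) hD G ?Pi ?subrr.
have hue : hform (D *m p k) (D *m p k) = hform (q k) (q k) by rewrite hD G ?eqxx ?orbT.
have orth_ab : hform (D *m p k - q k) (q a - q b) = 0 by rewrite hform_subr !orth ?subrr.
have [T [hT Tu Tfix]] := Sp_map_fixing_perp ht hue orth_ab.
exists (T *m D); split; first exact: in_SpM.
move=> i /orP [Pi|/eqP ->]; rewrite -mulmxA; last exact: Tu.
by rewrite Dp // Tfix // -hform_conj orth // qconj0.
Qed.

Lemma Sp_map_of_gram_eq (p q : nat -> V) (N : nat) : (2 <= N)%N ->
  hform (p 1%N) (p 1%N) = 0 -> hform (p 2%N) (p 2%N) = 0 -> hform (p 1%N) (p 2%N) = 1 ->
  (forall i j, (1 <= i <= N)%N -> (1 <= j <= N)%N -> hform (q i) (q j) = hform (p i) (p j)) ->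
  exists D, in_Sp D /\ forall i, (1 <= i <= N)%N -> D *m p i = q i.
Proof.
move=> N2 hp11 hp22 hp12 G.
have G12 i j : (i <= 2)%N -> (j <= 2)%N -> (0 < i)%N -> (0 < j)%N ->
    hform (q i) (q j) = hform (p i) (p j).
  by move=> *; apply: G; lia.
have hq11 : hform (q 1%N) (q 1%N) = 0 by rewrite G12.
have hq22 : hform (q 2%N) (q 2%N) = 0 by rewrite G12.
have hq12 : hform (q 1%N) (q 2%N) = 1 by rewrite G12.
suff /(_ (N - 2)%N) : forall m, (m.+2 <= N)%N -> exists D, in_Sp D /\
    forall i, (1 <= i <= m.+2)%N -> D *m p i = q i.
  by rewrite (_ : (N - 2).+2 = N)%N; [apply | lia].
elim => [_|m IH hm].
  have [D [hD Dp1 Dp2]] := Sp_map_hyperbolic_pair hp11 hp22 hp12 hq11 hq22 hq12.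
  by exists D; split=> // -[|[|[|i]]].
have [D [hD Dp]] := IH (ltnW hm).
set P := [pred i | 1 <= i <= m.+2]%N.
have P2 : P 2%N by rewrite /P /=; lia.
have GP i : P i || (i == m.+3) -> hform (q m.+3) (q i) = hform (p m.+3) (p i).
  by case/orP=> [/andP [i1 i2]|/eqP ->]; rewrite G //; lia.
have [D' [hD' D'p]] := Sp_extend_by_one hD (isT : P 1%N) P2
  (hyperbolic_pair_timelike hq11 hq22 hq12) Dp GP.
by exists D'; split=> // i hi; apply: D'p; rewrite /P /= -ltnS; lia.
Qed.

End Extension.

Section Orbits.
Variables (R : realType) (n : nat).
Local Notation H := (quat R).
Local Notation V := (qvec R n).

Lemma Sp1_orbit_refl (G : 'M[H]_(2 * n)) : Sp1_orbit G G.
Proof.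
by exists 1; split; [exact: qnorm2_1 | apply/matrixP => i j; rewrite mxE mul1r qconj1 mulr1].
Qed.

Lemma eq_Sp1_orbit (G G' : 'M[H]_(2 * n)) :
  Sp1_orbit G' G -> forall M, Sp1_orbit G M <-> Sp1_orbit G' M.
Proof.
case=> mu [mu1 ->] M.
have mumuK x : qconj mu * (mu * x) = x by rewrite mulrA mulqconjl mu1 qreal1 mul1r.
split=> [[nu [nu1 ->]]|[nu [nu1 ->]]].
  exists (nu * mu); split; first by rewrite /is_unit_quat qnorm2M nu1 mu1 mulr1.
  by apply/matrixP => i j; rewrite !mxE qconjM !mulrA.
exists (nu * qconj mu); split; first by rewrite /is_unit_quat qnorm2M qnorm2_conj nu1 mu1 mulr1.
by apply/matrixP => i j; rewrite !mxE qconjM qconjK -!mulrA !mumuK.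
Qed.

(* An index whose normalization condition g_(anchor i) i = 1 pins down the scalar of p_i. *)
Definition anchor (i : nat) : nat := if (5 <= i <= n.+2)%N then 3 else 1.

Lemma normalized_anchor (p : nat -> V) i :
  normalized p -> (2 <= i <= 2 * n)%N -> gram_entry p (anchor i) i = 1.
Proof.
case=> [[g12 g13] g14 _ g1k g3j] /andP [i2 i2n]; rewrite /anchor.
case: ifP => [/g3j //|/negbT hi].
have [->|/eqP i2'] // := eqVneq i 2%N; have [->|/eqP i3] // := eqVneq i 3%N.
have [->|/eqP i4] // := eqVneq i 4%N.
by apply: g1k; move: hi; rewrite negb_and -!ltnNge; lia.
Qed.

Lemma eq_Sp1_orbit_of_Sp_map (p p' : nat -> V) (C : 'M[H]_(n.+1)) : (2 <= n)%N ->
  normalized p -> normalized p' -> in_Sp C ->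
  (forall i, (1 <= i <= 2 * n)%N -> same_point (C *m p i) (p' i)) ->
  forall M, Sp1_orbit (gram p) M <-> Sp1_orbit (gram p') M.
Proof.
move=> n2 Np Np' hC hp.
have scal i : (1 <= i <= 2 * n)%N -> exists l, C *m p i = rscale (p' i) l.
  by case/hp=> _ [_ [l [_ ->]]]; exists l.
have rel i j li lj : C *m p i = rscale (p' i) li -> C *m p j = rscale (p' j) lj ->
    gram_entry p i j = qconj lj * gram_entry p' i j * li.
  exact: hform_Sp_rscale.
have [nu e1] := scal 1%N (ltac:(lia)).
have [l2 e2] := scal 2%N (ltac:(lia)); have [l3 e3] := scal 3%N (ltac:(lia)).
case: (Np) => [[g12 g13] _ n23 _ _]; case: (Np') => [[g12' g13'] _ n23' _ _].
have E12 : qconj l2 * nu = 1 by move: (rel _ _ _ _ e1 e2); rewrite g12 g12' mulr1.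
have E13 : qconj l3 * nu = 1 by move: (rel _ _ _ _ e1 e3); rewrite g13 g13' mulr1.
have [nu1 l2nu l3nu] := normalized_scalars_unit E12 E13 (rel _ _ _ _ e2 e3) n23 n23'.
have scal_nu i l : (1 <= i <= 2 * n)%N -> C *m p i = rscale (p' i) l -> l = nu.
  move=> /andP [i1 i2n] el; apply: unit_qconj_mul_eq1 nu1 _.
  have [i_1|i1'] := eqVneq i 1%N.
    by move: (rel _ _ _ _ el e2); rewrite i_1 g12 g12' mulr1 l2nu => <-.
  have ea : C *m p (anchor i) = rscale (p' (anchor i)) nu.
    by rewrite /anchor; case: ifP => _ //; rewrite e3 l3nu.
  have i2 : (2 <= i <= 2 * n)%N by lia.
  move: (rel _ _ _ _ ea el) => /(congr1 (@qconj R)); rewrite !normalized_anchor //.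
  by rewrite mulr1 qconjM qconjK qconj1 => <-.
apply: eq_Sp1_orbit; exists (qconj nu); split; first by rewrite /is_unit_quat qnorm2_conj.
apply/matrixP => a b; rewrite !mxE qconjK.
have [la ea] := scal a.+1 (ltn_ord a); have [lb eb] := scal b.+1 (ltn_ord b).
by rewrite (rel _ _ _ _ ea eb) (scal_nu _ _ _ ea) ?(scal_nu _ _ _ eb) ?ltn_ord.
Qed.

Lemma Sp_map_of_eq_Sp1_orbit (p p' : nat -> V) : (0 < n)%N ->
  hform (p 1%N) (p 1%N) = 0 -> hform (p 2%N) (p 2%N) = 0 -> hform (p 1%N) (p 2%N) = 1 ->
  (forall i, (1 <= i <= 2 * n)%N -> p' i != 0) ->
  (forall M, Sp1_orbit (gram p) M <-> Sp1_orbit (gram p') M) ->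
  exists C : 'M[H]_(n.+1), in_Sp C /\
    forall i, (1 <= i <= 2 * n)%N -> same_point (C *m p i) (p' i).
Proof.
move=> n0 h11 h22 h12 p'0 horb.
have [mu [mu1 eG]] : Sp1_orbit (gram p') (gram p) by apply/horb/Sp1_orbit_refl.
have G i j : (1 <= i <= 2 * n)%N -> (1 <= j <= 2 * n)%N ->
    hform (rscale (p' i) (qconj mu)) (rscale (p' j) (qconj mu)) = hform (p i) (p j).
  move=> /andP [i1 i2] /andP [j1 j2].
  have oi : (i.-1 < 2 * n)%N by lia.
  have oj : (j.-1 < 2 * n)%N by lia.
  have := congr1 (fun M : 'M_(2 * n) => M (Ordinal oi) (Ordinal oj)) eG.
  rewrite !mxE /gram_entry /= !prednK // => ->.
  by rewrite hform_scalel hform_scaler qconjK.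
have [C [hC Cp]] := Sp_map_of_gram_eq n0 (ltac:(lia) : (2 <= 2 * n)%N) h11 h22 h12 G.
have mu0 : qconj mu != 0 by rewrite -qnorm2_eq0 qnorm2_conj mu1 oner_eq0.
exists C; split=> // i hi; rewrite Cp //.
by split; [exact: rscale_neq0 (p'0 i hi) mu0 | split; [exact: p'0 | exists (qconj mu)]].
Qed.

End Orbits.

Lemma assoc_tuple_neq0 (R : realType) n (A B : 'M[quat R]_(n.+1))
    (aA rA aB rB : qvec R n) (xA xB : nat -> qvec R n) :
  weakly_nonsingular A B aA rA xA aB rB xB ->
  forall i, (1 <= i <= 2 * n)%N -> assoc_tuple aA rA xA aB rB xB i != 0.
Proof.
case=> [[_ [[aA0 _] _] [[rA0 _] _] xA0] [_ [[aB0 _] _] [[rB0 _] _] xB0] _ _ _].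
move=> i /andP [i1 i2]; rewrite /assoc_tuple.
do 4 (case: ifP => [_ //|/negbT/eqP ?]).
case: ifP => hle; apply: pos_vec_neq0.
  by apply: (proj1 (xA0 _ _)); lia.
by move/negbT: hle => hle; apply: (proj1 (xB0 _ _)); lia.
Qed.

Theorem mainTheorem8 (R : realType) (n : nat) (hn : (2 <= n)%N)
    (A B A' B' : 'M[quat R]_(n.+1))
    (aA rA aB rB aA' rA' aB' rB' : qvec R n)
    (xA xB xA' xB' : nat -> qvec R n) :
  weakly_nonsingular A B aA rA xA aB rB xB ->
  weakly_nonsingular A' B' aA' rA' xA' aB' rB' xB' ->
  normalized (assoc_tuple aA rA xA aB rB xB) ->
  normalized (assoc_tuple aA' rA' xA' aB' rB' xB') ->
  (exists C : 'M[quat R]_(n.+1), in_Sp C /\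
     forall i, (1 <= i <= 2 * n)%N ->
       same_point (C *m assoc_tuple aA rA xA aB rB xB i)
                  (assoc_tuple aA' rA' xA' aB' rB' xB' i))
  <->
  (forall M, Sp1_orbit (gram (assoc_tuple aA rA xA aB rB xB)) M <->
             Sp1_orbit (gram (assoc_tuple aA' rA' xA' aB' rB' xB')) M).
Proof.
move=> W W' N N'; split=> [[C [hC hp]]|horb].
  exact: eq_Sp1_orbit_of_Sp_map hn N N' hC hp.
have [[_ [[_ haA] _] [[_ hrA] _] _] _ _ _ _] := W.
have [[g12 _] _ _ _ _] := N.
apply: Sp_map_of_eq_Sp1_orbit haA hrA g12 (assoc_tuple_neq0 W') horb.
by apply: leq_trans hn.
Qed.
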